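(* Let $p$ be a prime and $n$ a positive integer with $p<n$. Then $$\mathcal{Q}_n=\mathcal{M}^n+\big(q_{n,p}G_p(X),\,q_{n,p+1}G_{p+1}(X),\dots,q_{n,n-1}G_{n-1}(X)\big),$$ where for $k=p,\dots,n-1$ the integer $q_{n,k}$ is $p^{\,n-v_p((pk)!)}$ if $v_p((pk)!)<n$ and $1$ otherwise. In particular $\mathcal{M}^n$ is strictly contained in $\mathcal{Q}_n$.
   Context: Fix a prime $p$ and $n\geq1$. $\mathcal{M}=(p,X)\subseteq\mathbb{Z}[X]$ and $\mathcal{Q}_n=\bigcap_{i\in\{0,\dots,p^n-1\},\ p\mid i}(p^n,X-i)$, i.e. the set of $f\in\mathbb{Z}[X]$ with $p^n\mid f(i)$ for every integer $i$ divisible by $p$. For $k\geq1$, $G_k(X)=\prod_{h=0}^{k-1}(X-hp)$, and $G_0(X)=1$. $v_p$ is the $p$-adic valuation. *)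

From HB Require Import structures.
From mathcomp Require Import all_boot all_order all_algebra.
Set Implicit Arguments. Unset Strict Implicit. Unset Printing Implicit Defensive.
Import Order.TTheory GRing.Theory Num.Theory.
Local Open Scope ring_scope.

Definition Gpoly (p k : nat) : {poly int} :=
  \prod_(h < k) ('X - ((h * p)%N%:Z)%:P).

Definition qnk (p n k : nat) : int :=
  if (logn p (p * k)`! < n)%N then ((p ^ (n - logn p (p * k)`!))%N)%:Z else 1.

(* Q_n = intersection over i in {0..p^n-1}, p | i, of (p^n, X - i):
   f in (p^n, X - i) iff p^n | f(i). *)
Definition inQ (p n : nat) (f : {poly int}) : Prop :=
  forall i : nat, (i < p ^ n)%N -> (p %| i)%N -> ((p ^ n)%N%:Z %| f.[i%:Z])%Z.

(* M^n, M = (p, X): generated by the products of n generators, i.e. by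
   p^(n-j) X^j, j = 0..n. *)
Definition inMpow (p n : nat) (f : {poly int}) : Prop :=
  exists c : nat -> {poly int},
    f = \sum_(j < n.+1) c j * (((p ^ (n - j))%N%:Z)%:P * 'X^j).

Definition inMpowPlus (p n : nat) (f : {poly int}) : Prop :=
  exists (c d : nat -> {poly int}),
    f = \sum_(j < n.+1) c j * (((p ^ (n - j))%N%:Z)%:P * 'X^j)
        + \sum_(p <= k < n) d k * ((qnk p n k)%:P * Gpoly p k).

(* M^n is described coefficientwise (Mcoef): f is in M^n iff p^(n-j) divides
   the j-th coefficient of f.  Since G_k(mp) = p^k k! C(m,k) and
   v_p(p^k k!) = v_p((pk)!), the number q_{n,k} is the least power of p that
   multiplies p^k k! into p^n Z; hence q_{n,k} G_k is in Q_n, and so is M^n.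
   Conversely, let I be the right-hand ideal and f in Q_n.  By induction on
   k <= n we write f = G_k g + (element of I): dividing g by X - kp gives
   G_k g = G_{k+1} g' + c G_k with c = g(kp), and evaluating at kp shows that
   p^n divides p^k k! c, i.e. q_{n,k} divides c, so c G_k lies in I (for k < p
   because q_{n,k} G_k = p^(n-k) G_k is already in M^n).  Finally
   G_n g is in M^n since p^(n-j) divides the j-th coefficient of G_n.
   The inclusion M^n < Q_n is strict: the X^p-coefficient of q_{n,p} G_p is
   q_{n,p} = p^(n-p-1) (or 1), which p^(n-p) does not divide. *)

From HB Require Import structures.
From mathcomp Require Import all_boot all_order all_algebra.
From mathcomp Require Import zify ring.
Set Implicit Arguments. Unset Strict Implicit.
Import Order.TTheory GRing.Theory Num.Theory.
Local Open Scope ring_scope.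

Lemma logn_fact_le p m N : prime p -> (m <= N)%N ->
  logn p m`! = (\sum_(1 <= i < N.+1) m %/ p ^ i)%N.
Proof.
move=> pp mN; rewrite logn_fact // [RHS](big_cat_nat _ (n := m.+1)) //=.
rewrite [X in (_ + X)%N]big1_seq ?addn0 // => i /andP[_].
rewrite mem_index_iota => /andP[mi _]; apply: divn_small.
exact: leq_trans mi (ltnW (ltn_expl _ (prime_gt1 pp))).
Qed.

Lemma logn_fact_mulp p k : prime p -> logn p (p * k)`! = (k + logn p k`!)%N.
Proof.
move=> pp; have p0 := prime_gt0 pp.
rewrite (logn_fact_le pp (leqnSn (p * k))) big_ltn // expn1 mulKn //.
rewrite big_add1 /= (logn_fact_le pp (leq_pmull k p0)); congr (_ + _)%N.
by apply: eq_bigr => i _; rewrite expnS divnMl.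
Qed.

Lemma logn_fact_small p k : prime p -> (k < p)%N -> logn p k`! = 0%N.
Proof.
move=> pp kp; rewrite (logn_fact_le pp (leqnn k)) big1_seq // => i.
rewrite mem_index_iota => /andP[_ /andP[i1 _]]; apply: divn_small.
by apply: leq_trans kp _; rewrite -{1}(expn1 p) leq_exp2l ?prime_gt1.
Qed.

Lemma logn_expn_fact p k : prime p -> logn p (p ^ k * k`!) = logn p (p * k)`!.
Proof.
move=> pp; rewrite lognM ?fact_gt0 ?expn_gt0 ?prime_gt0 //.
by rewrite pfactorK // logn_fact_mulp.
Qed.

(* The evaluation points kp, k < n, lie in the range 0 .. p^n - 1 of inQ. *)
Lemma ltn_mul_expn p k n : (1 < p)%N -> (k < n)%N -> (k * p < p ^ n)%N.
Proof.
move=> p1 kn; case: n kn => // n; rewrite ltnS expnSr => kn.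
by rewrite ltn_mul2r (ltnW p1) (leq_ltn_trans kn (ltn_expl n p1)).
Qed.

Lemma dvdz_natexp2l p a b : (a <= b)%N -> ((p ^ a)%N%:Z %| (p ^ b)%N%:Z)%Z.
Proof. by move=> ab; rewrite dvdzE /= dvdn_exp2l. Qed.

Lemma dvdz_pfactor_cancel p n m (c : int) : prime p -> (0 < m)%N ->
  (logn p m <= n)%N -> ((p ^ n)%N%:Z %| c * m%:Z)%Z ->
  ((p ^ (n - logn p m))%N%:Z %| c)%Z.
Proof.
move=> pp m0 vn; have [u cu em] := pfactor_coprime pp m0.
rewrite {1}em PoszM !dvdzE abszM /= -{1}(subnK vn) expnD mulnA.
by rewrite dvdn_pmul2r ?expn_gt0 ?prime_gt0 // Gauss_dvdl // coprimeXl.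
Qed.

Lemma Gpoly0 p : Gpoly p 0 = 1.
Proof. by rewrite /Gpoly big_ord0. Qed.

Lemma GpolyS p k : Gpoly p k.+1 = Gpoly p k * ('X - ((k * p)%N%:Z)%:P).
Proof. by rewrite /Gpoly big_ord_recr. Qed.

(* p^(k-j) divides the j-th coefficient of G_k (each root is a multiple of p). *)
Lemma Gpoly_coef_dvd p k j : ((p ^ (k - j))%N%:Z %| (Gpoly p k)`_j)%Z.
Proof.
elim: k j => [|k IH] j.
  by rewrite Gpoly0 coefC; case: j => [|j] //=; rewrite dvdz0.
rewrite GpolyS mulrBr coefB coefMX coefMC; apply: rpredB.
  by case: j => [|j] /=; rewrite ?dvdz0 ?subSS.
apply: (@dvdz_trans ((p ^ (k - j) * p)%N%:Z)).
  by rewrite -expnSr dvdz_natexp2l //; lia.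
by rewrite !PoszM dvdz_mul // dvdz_mull.
Qed.

Lemma Gpoly_lead p k : (Gpoly p k)`_k = 1.
Proof.
have := monic_prod_XsubC (index_enum 'I_k) predT (fun h : 'I_k => (h * p)%N%:Z).
rewrite -/(Gpoly p k) => /monicP; rewrite lead_coefE size_prod_XsubC.
by rewrite /index_enum unlock -enumT size_enum_ord.
Qed.

Lemma Gpoly_horner p k m : (Gpoly p k).[(m * p)%N%:Z] = (p ^ k * m ^_ k)%N%:Z.
Proof.
elim: k => [|k IH]; first by rewrite Gpoly0 hornerC ffactn0 expn0.
rewrite GpolyS hornerM hornerXsubC IH ffactnSr.
have [km|mk] := leqP k m; last by rewrite ffact_small // !muln0 mul0r.
by rewrite subzn ?leq_mul2r ?km ?orbT // -PoszM -mulnBl expnSr; congr Posz; ring.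
Qed.

Section PowerOfM.
Variables p n : nat.

Definition Mcoef (f : {poly int}) : Prop :=
  forall j : nat, ((p ^ (n - j))%N%:Z %| f`_j)%Z.

Lemma Mcoef0 : Mcoef 0.
Proof. by move=> j; rewrite coef0 dvdz0. Qed.

Lemma McoefD f g : Mcoef f -> Mcoef g -> Mcoef (f + g).
Proof. by move=> hf hg j; rewrite coefD rpredD. Qed.

Lemma McoefM f g : Mcoef g -> Mcoef (f * g).
Proof.
move=> hg j; rewrite coefM; apply: rpred_sum => i _; apply: dvdz_mull.
by apply: dvdz_trans (hg _); rewrite dvdz_natexp2l //; have := ltn_ord i; lia.
Qed.

Lemma Mcoef_sum (I : Type) (r : seq I) (P : pred I) (F : I -> {poly int}) :
  (forall i, P i -> Mcoef (F i)) -> Mcoef (\sum_(i <- r | P i) F i).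
Proof. by move=> h; elim/big_ind: _ => //; [exact: Mcoef0 | exact: McoefD]. Qed.

Lemma inMpowE f : inMpow p n f <-> Mcoef f.
Proof.
split=> [[c ->]|hf].
  apply: Mcoef_sum => j _; apply: McoefM => i.
  by rewrite coefCM coefXn; case: eqP => [->|_]; rewrite ?mulr1 ?mulr0 ?dvdz0.
exists (fun j => if (j < n)%N then (f`_j %/ (p ^ (n - j))%N%:Z)%Z%:P
                 else drop_poly n f).
rewrite big_ord_recr /= ltnn subnn expn0 mul1r.
rewrite -[f in LHS](poly_take_drop n); congr (_ + _).
rewrite /take_poly poly_def; apply: eq_bigr => i _ /=.
by rewrite (ltn_ord i) mulrA -polyCM divzK // mul_polyC.
Qed.

Lemma Mcoef_pG k : (k <= n)%N -> Mcoef ((p ^ (n - k))%N%:Z%:P * Gpoly p k).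
Proof.
move=> kn j; rewrite coefCM.
apply: (@dvdz_trans ((p ^ (n - k) * p ^ (k - j))%N%:Z)).
  by rewrite -expnD dvdz_natexp2l //; lia.
by rewrite PoszM dvdz_mul // Gpoly_coef_dvd.
Qed.

Lemma Mcoef_G k : (n <= k)%N -> Mcoef (Gpoly p k).
Proof.
by move=> nk j; apply: dvdz_trans (Gpoly_coef_dvd p k j); rewrite dvdz_natexp2l //; lia.
Qed.

End PowerOfM.

Section IdealQ.
Variables p n : nat.
Local Notation Q := (inQ p n).

Lemma QD f g : Q f -> Q g -> Q (f + g).
Proof. by move=> hf hg i ip pi; rewrite hornerD rpredD ?hf ?hg. Qed.

Lemma QB f g : Q f -> Q g -> Q (f - g).
Proof. by move=> hf hg i ip pi; rewrite hornerD hornerN rpredB ?hf ?hg. Qed.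

Lemma QM f g : Q g -> Q (f * g).
Proof. by move=> hg i ip pi; rewrite hornerM dvdz_mull ?hg. Qed.

Lemma Q_sum (I : Type) (r : seq I) (P : pred I) (F : I -> {poly int}) :
  (forall i, P i -> Q (F i)) -> Q (\sum_(i <- r | P i) F i).
Proof.
move=> h; elim/big_ind: _ => //; last exact: QD.
by move=> i _ _; rewrite horner0 dvdz0.
Qed.

(* M^n is contained in Q_n: if p | i, then p^(n-j) p^j divides a_j i^j. *)
Lemma Mcoef_Q f : Mcoef p n f -> Q f.
Proof.
move=> hf i _ /divnK ei; rewrite horner_coef; apply: rpred_sum => j _.
apply: (@dvdz_trans ((p ^ (n - j) * p ^ j)%N%:Z)).
  by rewrite -expnD dvdz_natexp2l //; lia.
rewrite PoszM dvdz_mul ?hf // dvdzE abszX /= dvdn_exp2r //.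
by rewrite -ei dvdn_mull.
Qed.

Hypothesis pp : prime p.

(* q_{n,k} generates the ideal of integers c such that p^n | c p^k k!. *)
Lemma qnk_annihilates k : ((p ^ n)%N%:Z %| qnk p n k * (p ^ k * k`!)%N%:Z)%Z.
Proof.
have hv := pfactor_dvdnn p (p ^ k * k`!); rewrite logn_expn_fact // in hv.
rewrite /qnk; case: ltnP => vn.
  by rewrite -PoszM dvdzE /= -{1}(subnK (ltnW vn)) expnD dvdn_mul.
by rewrite mul1r dvdzE /=; apply: dvdn_trans hv; apply: dvdn_exp2l.
Qed.

Lemma qnk_dvd k c : ((p ^ n)%N%:Z %| c * (p ^ k * k`!)%N%:Z)%Z -> (qnk p n k %| c)%Z.
Proof.
rewrite /qnk -logn_expn_fact //; case: ltnP => vn h; last exact: dvd1z.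
apply: dvdz_pfactor_cancel h => //; last exact: ltnW.
by rewrite muln_gt0 expn_gt0 prime_gt0 ?fact_gt0.
Qed.

(* q_{n,k} G_k lies in Q_n, since G_k(mp) = p^k k! C(m,k). *)
Lemma qG_Q k : Q ((qnk p n k)%:P * Gpoly p k).
Proof.
move=> i _ /divnK ei; rewrite hornerCM -ei Gpoly_horner -bin_ffact.
by rewrite (mulnC 'C(_, _)) mulnA PoszM mulrA dvdz_mulr // qnk_annihilates.
Qed.

End IdealQ.

Section IdealI.
Variables p n : nat.
Hypothesis pp : prime p.

Local Notation qG k := ((qnk p n k)%:P * Gpoly p k).

Definition inI (f : {poly int}) : Prop :=
  exists d : nat -> {poly int}, Mcoef p n (f - \sum_(p <= k < n) d k * qG k).

Lemma inI_inMpowPlus f : inI f <-> inMpowPlus p n f.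
Proof.
split=> [[d /inMpowE [c ec]] | [c [d ->]]].
  by exists c, d; rewrite -ec subrK.
by exists d; rewrite addrK -inMpowE; exists c.
Qed.

Lemma inI_of_Mcoef f : Mcoef p n f -> inI f.
Proof. by move=> hf; exists (fun=> 0); rewrite big1 ?subr0 // => k _; rewrite mul0r. Qed.

Lemma inID f g : inI f -> inI g -> inI (f + g).
Proof.
move=> [d hd] [e he]; exists (fun k => d k + e k).
under eq_bigr => k _ do rewrite mulrDl.
by rewrite big_split /= opprD addrACA; apply: McoefD.
Qed.

Lemma inIM h f : inI f -> inI (h * f).
Proof.
move=> [d hd]; exists (fun k => h * d k).
under eq_bigr => k _ do rewrite -mulrA.
by rewrite -mulr_sumr -mulrBr; apply: McoefM.
Qed.

Lemma inI_Q f : inI f -> inQ p n f.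
Proof.
move=> [d hd]; rewrite -(subrK (\sum_(p <= k < n) d k * qG k) f).
by apply: QD; [exact: Mcoef_Q | apply: Q_sum => k _; apply/QM/qG_Q].
Qed.

(* q_{n,k} G_k lies in I for every k < n: for k < p it equals p^(n-k) G_k. *)
Lemma inI_qG k : (k < n)%N -> inI (qG k).
Proof.
move=> kn; have [kp | pk] := ltnP k p.
  have vk : logn p (p * k)`! = k by rewrite logn_fact_mulp // logn_fact_small ?addn0.
  by apply: inI_of_Mcoef; rewrite /qnk vk kn; apply/Mcoef_pG/ltnW.
exists (fun j => if j == k then 1 else 0).
under eq_bigr => j _ do rewrite (fun_if (fun a => a * qG j)) mul1r mul0r.
by rewrite -big_mkcond big_nat1_eq pk kn subrr; apply: Mcoef0.
Qed.

(* Reduction step: if G_k g is in Q_n, then G_k g = G_{k+1} g' modulo I, because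
   the remainder g(kp) of g modulo X - kp is divisible by q_{n,k}. *)
Lemma inI_reduce k g : (k < n)%N -> inQ p n (Gpoly p k * g) ->
  exists g', inI (Gpoly p k * g - Gpoly p k.+1 * g').
Proof.
move=> kn hQ; set a := (k * p)%N%:Z; set c := g.[a].
have /factor_theorem [g' eg'] : root (g - c%:P) a.
  by rewrite rootE hornerD hornerN hornerC subrr.
exists g'.
have -> : Gpoly p k * g - Gpoly p k.+1 * g' = c%:P * Gpoly p k.
  by rewrite GpolyS -/a -[g](subrK c%:P) eg'; ring.
have hc : ((p ^ n)%N%:Z %| c * (p ^ k * k`!)%N%:Z)%Z.
  have := hQ _ (ltn_mul_expn (prime_gt1 pp) kn) (dvdn_mull _ (dvdnn p)).
  by rewrite hornerM Gpoly_horner ffactnn mulrC.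
by rewrite -(divzK (qnk_dvd pp hc)) polyCM -mulrA; apply/inIM/inI_qG.
Qed.

(* Q_n is contained in I, by iterating the reduction step from k = 0 to k = n. *)
Lemma Q_inI f : inQ p n f -> inI f.
Proof.
move=> Qf.
have reach k : (k <= n)%N -> exists g, inI (f - Gpoly p k * g).
  elim: k => [_ | k IH kn].
    by exists f; rewrite Gpoly0 mul1r subrr; apply/inI_of_Mcoef/Mcoef0.
  have [g hg] := IH (ltnW kn).
  have hQ : inQ p n (Gpoly p k * g).
    by rewrite -[_ * g](subKr f); apply: QB Qf (inI_Q hg).
  have [g' hg'] := inI_reduce kn hQ.
  by exists g'; rewrite -(subrK (Gpoly p k * g) f) -addrA; apply: inID.
have [g hg] := reach n (leqnn n).
rewrite -(subrK (Gpoly p n * g) f); apply: inID hg _.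
by apply: inI_of_Mcoef; rewrite mulrC; apply/McoefM/Mcoef_G.
Qed.

End IdealI.

(* q_{n,p} G_p is not in M^n: its X^p-coefficient q_{n,p} is not divisible by p^(n-p). *)
Lemma qG_notin_Mcoef p n : prime p -> (p < n)%N ->
  ~ Mcoef p n ((qnk p n p)%:P * Gpoly p p).
Proof.
move=> pp pn /(_ p); rewrite coefCM Gpoly_lead mulr1.
have vp : logn p (p * p)`! = p.+1.
  rewrite logn_fact_mulp // -[p in p`!]muln1 logn_fact_mulp //.
  by rewrite logn_fact_small ?prime_gt1 // addn0 addn1.
rewrite /qnk vp dvdzE /=; case: ltnP => h.
  by rewrite dvdn_Pexp2l ?prime_gt1 //; lia.
move/(dvdn_leq (ltnSn 0)); have := ltn_expl (n - p) (prime_gt1 pp); lia.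
Qed.

Theorem mainTheorem15 (p n : nat) :
  prime p -> (0 < n)%N -> (p < n)%N ->
  (forall f : {poly int}, inQ p n f <-> inMpowPlus p n f) /\
  ((forall f : {poly int}, inMpow p n f -> inQ p n f) /\
   exists f : {poly int}, inQ p n f /\ ~ inMpow p n f).
Proof.
move=> pp _ pn; split.
  by move=> f; rewrite -inI_inMpowPlus; split; [exact: Q_inI | exact: inI_Q].
split; first by move=> f /inMpowE; exact: Mcoef_Q.
exists ((qnk p n p)%:P * Gpoly p p); split; first exact: qG_Q.
by rewrite inMpowE; exact: qG_notin_Mcoef.
Qed.
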